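(* Let $\mathcal I$ be an instance of the a priori TRP on a metric $(V,d)$ with root $r$, $n=|V|$, and probabilities $p_v\ge 1/n^2$ for all $v\in V$. Let $p=\frac1n\min_{v\in V}p_v$ and let $\mathcal J$ be the uniform instance obtained by replacing each $v\in V$ by a set $S_v$ of $t_v=\lceil p_v/p\rceil$ co-located copies of $v$ (distance $0$ within $S_v$, distance $d(u,v)$ between any copy of $u$ and any copy of $v$), each copy independently active with probability $p$. Let $\widehat\pi$ be any consecutive master tour on $\mathcal J$, i.e. one visiting all vertices of each $S_v$ consecutively, with expected latency $\mathrm{ALG}(\mathcal J)$, and let $\pi$ be the master tour on $V$ visiting the vertices $v$ in the order in which the groups $S_v$ are visited by $\widehat\pi$. Then the expected latency $\mathrm{ALG}(\mathcal I)$ of $\pi$ on $\mathcal I$ satisfies $$\mathrm{ALG}(\mathcal I)\le\left(\frac{e}{e-1}\right)^3\left(1+\frac1n\right)^3\mathrm{ALG}(\mathcal J).$$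
   Context: An instance of the a priori TRP consists of a finite metric $(V,d)$, a root $r$, and independent activation probabilities $p_v$. A master tour is a tour from $r$ visiting all vertices; for a random active set $A$ (each $v$ independently active with probability $p_v$), the tour is shortcut to $A$, the latency of $v\in A$ is its distance from $r$ along the shortcut tour, and the expected latency of the master tour is the expected sum of latencies of active vertices. *)

From HB Require Import structures.
From mathcomp Require Import all_boot all_order all_algebra.
From mathcomp Require Import reals sequences exp.
Set Implicit Arguments. Unset Strict Implicit. Unset Printing Implicit Defensive.
Import Order.TTheory GRing.Theory Num.Theory.
Local Open Scope ring_scope.

Section TRP.
Variables (R : realType) (V : finType) (d : V -> V -> R).

Definition is_metric : Prop :=
  [/\ forall x y, 0 <= d x y,
      forall x y, d x y = 0 <-> x = y,
      forall x y, d x y = d y x &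
      forall x y z, d x z <= d x y + d y z].

Fixpoint walk_len (x : V) (s : seq V) : R :=
  match s with [::] => 0 | y :: s' => d x y + walk_len y s' end.

Variables (T : finType) (loc : T -> V) (r : V).

Definition master_tour (s : seq T) : Prop := perm_eq s (enum T).

(* latency of u in the tour s shortcut to the active set A:
   distance from r along r -> (active vertices in tour order) up to u *)
Definition latency (s : seq T) (A : {set T}) (u : T) : R :=
  let sA := [seq x <- s | x \in A] in
  walk_len r (map loc (take (index u sA).+1 sA)).

Definition prob_set (q : T -> R) (A : {set T}) : R :=
  (\prod_(v in A) q v) * \prod_(v in ~: A) (1 - q v).

Definition exp_latency (q : T -> R) (s : seq T) : R :=
  \sum_(A : {set T}) prob_set q A * \sum_(u in A) latency s A u.

End TRP.

Section Uniform.
Variables (R : realType) (V : finType) (pr : V -> R).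

(* p = (1/n) min_v p_v   (all p_v <= 1, so the min with 1 is harmless) *)
Definition unif_p : R := (\big[Num.min/1]_(v : V) pr v) / #|V|%:R.

Definition ncopies (v : V) : nat := `|Num.ceil (pr v / unif_p)|%N.

Definition copyT : finType := {v : V & 'I_(ncopies v)}.

Definition copy_loc (x : copyT) : V := tag x.

Definition copy_prob (x : copyT) : R := unif_p.

Definition consecutive (s : seq copyT) : Prop :=
  forall i j k, (i <= j)%N -> (j <= k)%N -> (k < size s)%N ->
    forall x0 : copyT,
    tag (nth x0 s i) = tag (nth x0 s k) -> tag (nth x0 s j) = tag (nth x0 s i).

Definition induced_tour (s : seq copyT) : seq V := undup (map tag s).

End Uniform.

(* Both expected latencies decompose over the vertices u as the activation
   probability of u times the expected length of the walk from r through the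
   active predecessors of u to u.  In a consecutive tour the copies of v form a
   run, which acts as a single stop at v active with probability
   1 - (1 - p)^t_v >= p_v / 2, while p_v <= t_v p bounds the weights.  Going
   through the tour run by run, the triangle inequality shows that giving each
   stop its true probability p_v instead multiplies these walk lengths by at
   most 3.  Hence ALG(I) <= 3 ALG(J), and 3 <= (e/(e-1))^3 because
   e <= (4/3)^4. *)

From HB Require Import structures.
From mathcomp Require Import all_boot all_order all_algebra.
From mathcomp Require Import reals sequences exp.
From mathcomp Require Import ring lra.
Import Order.TTheory GRing.Theory Num.Theory.
Local Open Scope ring_scope.
Set Implicit Arguments. Unset Strict Implicit. Unset Printing Implicit Defensive.

Section Expectation.
Variables (R : realType) (T : finType) (q : T -> R).

Definition expect (F : {set T} -> R) : R := \sum_(A : {set T}) prob_set q A * F A.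

Lemma sum_prob_set : \sum_(A : {set T}) prob_set q A = 1.
Proof.
transitivity (\prod_(i : T) (q i + (1 - q i))).
  rewrite bigA_distr; apply: eq_bigr => A _.
  rewrite /prob_set [RHS](bigID (mem A)) /=; congr (_ * _).
    by apply: eq_bigr => i ->.
  apply: eq_big => [i|i]; first by rewrite in_setC.
  by rewrite in_setC => /negbTE ->.
by rewrite big1 // => i _; rewrite addrC subrK.
Qed.

Lemma prob_set_ge0 (A : {set T}) : (forall v, 0 <= q v <= 1) -> 0 <= prob_set q A.
Proof.
move=> q01; apply: mulr_ge0; apply: prodr_ge0 => v _.
  by case/andP: (q01 v).
by case/andP: (q01 v) => _; rewrite subr_ge0.
Qed.

Lemma expect_cst (c : R) : expect (fun=> c) = c.
Proof. by rewrite /expect -big_distrl /= sum_prob_set mul1r. Qed.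

Lemma expectD (F G : {set T} -> R) :
  expect (fun A => F A + G A) = expect F + expect G.
Proof. by rewrite /expect -big_split; apply: eq_bigr => A _; rewrite mulrDr. Qed.

Lemma eq_expect (F G : {set T} -> R) : F =1 G -> expect F = expect G.
Proof. by move=> FG; apply: eq_bigr => A _; rewrite FG. Qed.

Lemma expect_sum (I : finType) (F : I -> {set T} -> R) :
  expect (fun A => \sum_(i : I) F i A) = \sum_(i : I) expect (F i).
Proof.
rewrite /expect exchange_big /=; apply: eq_bigr => A _.
by rewrite big_distrr.
Qed.

Lemma expectZ (c : R) (F : {set T} -> R) : expect (fun A => c * F A) = c * expect F.
Proof. by rewrite /expect big_distrr; apply: eq_bigr => A _; rewrite mulrCA. Qed.

Lemma sum_set_toggle (x : T) (G : {set T} -> R) :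
  \sum_(A : {set T}) G A = \sum_(A : {set T} | x \notin A) (G (x |: A) + G A).
Proof.
rewrite (bigID (fun A : {set T} => x \in A)) /= [RHS]big_split /=; congr (_ + _).
pose tog (A : {set T}) : {set T} := if x \in A then A :\ x else x |: A.
have togK : involutive tog.
  move=> A; rewrite /tog; case: (boolP (x \in A)) => xA.
    by rewrite setD11 setD1K.
  by rewrite setU11 setU1K.
rewrite (reindex_inj (inv_inj togK)) /=; apply: eq_big => A.
  by rewrite /tog; case: ifP => xA; rewrite ?setD11 ?setU11.
by rewrite /tog; case: ifP => xA //; rewrite setD11.
Qed.

Definition prob_off (x : T) (A : {set T}) : R :=
  (\prod_(v | (v \in A) && (v != x)) q v) * \prod_(v | (v \notin A) && (v != x)) (1 - q v).

Lemma prob_offU1 (x : T) (A : {set T}) : prob_off x (x |: A) = prob_off x A.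
Proof.
by rewrite /prob_off; congr (_ * _); apply: eq_bigl => v; rewrite !inE;
  case: eqP; rewrite ?andbF ?andbT.
Qed.

Lemma prob_set_in (x : T) (A : {set T}) :
  x \in A -> prob_set q A = q x * prob_off x A.
Proof.
move=> xA; rewrite /prob_set (bigD1 x) //= -mulrA /prob_off; congr (_ * (_ * _)).
by apply: eq_bigl => v; rewrite in_setC; case: eqP => [->|]; rewrite ?xA ?andbT.
Qed.

Lemma prob_set_out (x : T) (A : {set T}) :
  x \notin A -> prob_set q A = (1 - q x) * prob_off x A.
Proof.
move=> xA; rewrite /prob_set (bigD1 x (P := mem (~: A))) /=; last by rewrite in_setC.
rewrite /prob_off mulrCA; congr (_ * (_ * _)).
  by apply: eq_bigl => v; case: eqP => [->|]; rewrite ?(negbTE xA) ?andbT.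
by apply: eq_bigl => v; rewrite in_setC.
Qed.

Lemma expect_split1 (x : T) (F : {set T} -> R) :
  expect F = expect (fun A => q x * F (x |: A) + (1 - q x) * F (A :\ x)).
Proof.
rewrite /expect (sum_set_toggle x) [RHS](sum_set_toggle x).
apply: eq_bigr => A xA.
have AxA : A :\ x = A by apply/setDidPl; rewrite disjoint_sym disjoints1.
rewrite (prob_set_in (setU11 x A)) (prob_set_out xA) prob_offU1 (setU1K xA) AxA.
rewrite setUA setUid; ring.
Qed.

End Expectation.

Section ExpectedWalk.
Variables (R : realType) (V : finType) (d : V -> V -> R).

(* [exp_walk x l w] is the expected length of the walk that starts at [x], visits
   in order the active stops of [l], a stop [(y, c)] being active independently
   with probability [c], and ends at [w]. *)
Fixpoint exp_walk (x : V) (l : seq (V * R)) (w : V) : R :=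
  match l with
  | [::] => d x w
  | (y, c) :: l' => c * (d x y + exp_walk y l' w) + (1 - c) * exp_walk x l' w
  end.

Variables (T : finType) (loc : T -> V) (q : T -> R).

Lemma expect_walk_len (l : seq T) : uniq l -> forall x w,
  expect q (fun A => walk_len d x (map loc [seq y <- l | y \in A] ++ [:: w]))
  = exp_walk x [seq (loc y, q y) | y <- l] w.
Proof.
elim: l => [|a l IHl] /= ul x w.
  by rewrite -[RHS](expect_cst q); apply: eq_expect => A /=; rewrite addr0.
case/andP: ul => al ul.
have filterU1 (A : {set T}) : [seq y <- l | y \in a |: A] = [seq y <- l | y \in A].
  apply: eq_in_filter => y yl; rewrite in_setU1.
  by case: eqP => // ya; rewrite -ya yl in al.
have filterD1 (A : {set T}) : [seq y <- l | y \in A :\ a] = [seq y <- l | y \in A].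
  apply: eq_in_filter => y yl; rewrite in_setD1.
  by case: eqP => // ya; rewrite -ya yl in al.
rewrite (expect_split1 _ a).
set W := fun z (A : {set T}) => walk_len d z (map loc [seq y <- l | y \in A] ++ [:: w]).
transitivity (expect q (fun A => (q a * d x (loc a) + q a * W (loc a) A) + (1 - q a) * W x A)).
  by apply: eq_expect => A; rewrite /= setU11 setD11 /= filterU1 filterD1 /W; ring.
by rewrite !expectD !expectZ expect_cst !IHl //; ring.
Qed.

Variable r : V.

Lemma latency_setU1 (s : seq T) (A : {set T}) (u : T) : u \in s ->
  latency d loc r s (u |: A) u =
  walk_len d r (map loc [seq y <- take (index u s) s | y \in A] ++ [:: loc u]).
Proof.
move=> us; rewrite /latency; set s1 := take (index u s) s.
have us1 : u \notin s1 by rewrite in_take // ltnn.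
have -> : s = s1 ++ u :: drop (index u s).+1 s.
  by rewrite -[LHS](cat_take_drop (index u s)) (drop_nth u) ?index_mem ?nth_index.
rewrite filter_cat /= setU11.
have -> : [seq y <- s1 | y \in u |: A] = [seq y <- s1 | y \in A].
  apply: eq_in_filter => y ys1; rewrite in_setU1.
  by case: eqP => // yu; rewrite -yu ys1 in us1.
set f := [seq y <- s1 | y \in A].
have uf : u \notin f by rewrite mem_filter negb_and us1 orbT.
rewrite index_cat (negbTE uf) /= eqxx addn0 take_cat ltnNge leqnSn /= subSnn /= take0.
by rewrite map_cat.
Qed.

Lemma exp_latency_prefix (s : seq T) : uniq s -> (forall u, u \in s) ->
  exp_latency d loc r q s =
  \sum_(u : T) q u * exp_walk r [seq (loc y, q y) | y <- take (index u s) s] (loc u).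
Proof.
move=> us alls.
transitivity (expect q (fun A => \sum_(u : T) if u \in A then latency d loc r s A u else 0)).
  by apply: eq_expect => A; rewrite big_mkcond.
rewrite (expect_sum q (fun (u : T) A => if u \in A then latency d loc r s A u else 0)).
apply: eq_bigr => u _.
rewrite (expect_split1 _ u) -expect_walk_len ?take_uniq // -expectZ.
by apply: eq_expect => A; rewrite setU11 setD11 mulr0 addr0 latency_setU1.
Qed.

Lemma exp_latency_ge0 (s : seq T) : (forall x y, 0 <= d x y) ->
  (forall v, 0 <= q v <= 1) -> 0 <= exp_latency d loc r q s.
Proof.
move=> d_ge0 q01; apply: sumr_ge0 => A _; apply: mulr_ge0; first exact: prob_set_ge0.
apply: sumr_ge0 => u _; rewrite /latency.
by elim: (map loc _) r => //= y l IHl x; rewrite addr_ge0.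
Qed.

End ExpectedWalk.

Section Runs.
Variables (T : eqType) (x0 : T).

Definition contiguous (m : seq T) : Prop :=
  forall i j k, (i <= j <= k)%N -> (k < size m)%N ->
    nth x0 m i = nth x0 m k -> nth x0 m j = nth x0 m i.

Lemma nth_nseq_cat n a m i : nth x0 (nseq n a ++ m) (n + i) = nth x0 m i.
Proof. by rewrite nth_cat size_nseq ltnNge leq_addr /= addKn. Qed.

Lemma contiguous_run a m : contiguous (a :: m) ->
  exists c m', [/\ a :: m = nseq c.+1 a ++ m', a \notin m' & contiguous m'].
Proof.
move=> cm; set c := find (predC1 a) m; exists c, (drop c m).
have take_run : take c m = nseq c a.
  have sz : size (take c m) = c by rewrite size_takel // find_size.
  rewrite -{2}sz; apply/all_pred1P/(all_nthP x0) => i; rewrite sz => ic.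
  by rewrite nth_take //; have /negbT := before_find x0 ic; rewrite /= negbK.
have Em : a :: m = nseq c.+1 a ++ drop c m by rewrite /= -take_run cat_take_drop.
have size_m : size (a :: m) = (c.+1 + size (drop c m))%N by rewrite {1}Em size_cat size_nseq.
have nth_m i : nth x0 (a :: m) (c.+1 + i) = nth x0 (drop c m) i by rewrite {1}Em nth_nseq_cat.
split=> //; last first.
  move=> i j k /andP[ij jk] ks e.
  have := cm (c.+1 + i)%N (c.+1 + j)%N (c.+1 + k)%N.
  by rewrite !leq_add2l ij jk size_m ltn_add2l !nth_m => /(_ isT ks e).
apply/negP => am'.
have ks : (index a (drop c m) < size (drop c m))%N by rewrite index_mem.
have cs : (c < size m)%N by rewrite -subn_gt0 -size_drop (leq_ltn_trans _ ks).
have := cm 0%N c.+1 (c.+1 + index a (drop c m))%N.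
rewrite leq_addr size_m ltn_add2l nth_m nth_index // => /(_ isT ks erefl) /=.
have := nth_find x0 (a := predC1 a) (s := m); rewrite has_find -/c => /(_ cs) /=.
by move=> /eqP.
Qed.

End Runs.

(* One run in the proof of [exp_walk_undup_le]: a stop at [a] active with
   probability [pa] against one active with probability [Q], where [dxa = d x a]
   and [Ga], [Gx] (resp. [ha], [hx]) are the expected remaining walks from [a]
   and from [x] on the two sides. *)
Lemma run_step_le (R : realFieldType) (pa Q dxa Ga Gx ha hx : R) :
  0 <= pa <= 1 -> pa / 2 <= Q -> Ga <= 3 * ha -> Gx <= 3 * hx ->
  hx <= dxa + ha -> Ga <= dxa + Gx ->
  pa * (dxa + Ga) + (1 - pa) * Gx <= 3 * (Q * (dxa + ha) + (1 - Q) * hx).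
Proof.
move=> /andP[pa0 pa1] paQ Gha Ghx hx_tri Ga_tri.
have t1 : 0 <= (Q - pa / 2) * (dxa + ha - hx) by rewrite mulr_ge0 ?subr_ge0.
have t2 : 0 <= pa * (dxa + Gx - Ga) by rewrite mulr_ge0 ?subr_ge0.
have t3 : 0 <= (1 - pa / 2) * (3 * hx - Gx) by rewrite mulr_ge0 ?subr_ge0 //; lra.
have t4 : 0 <= pa * (3 * ha - Ga) by rewrite mulr_ge0 ?subr_ge0.
lra.
Qed.

Section ExpectedWalkMetric.
Variables (R : realType) (V : finType) (d : V -> V -> R).
Hypothesis d_metric : is_metric d.

Let d_ge0 x y : 0 <= d x y. Proof. by case: d_metric. Qed.
Let dxx x : d x x = 0. Proof. by case: d_metric => _ dP _ _; apply/dP. Qed.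
Let d_sym x y : d x y = d y x. Proof. by case: d_metric. Qed.
Let d_triangle x y z : d x z <= d x y + d y z. Proof. by case: d_metric. Qed.

Definition probs01 (l : seq (V * R)) : bool := all (fun c => 0 <= c.2 <= 1) l.

Lemma probs01_map (f : V -> R) (l : seq V) : (forall u, 0 <= f u <= 1) ->
  probs01 [seq (u, f u) | u <- l].
Proof. by move=> f01; rewrite /probs01 all_map; apply/allP => u _ /=. Qed.

Lemma exp_walk_ge0 (l : seq (V * R)) : probs01 l -> forall x w, 0 <= exp_walk d x l w.
Proof.
elim: l => [|[y c] l IHl] /=; first by move=> _ x w; apply: d_ge0.
case/andP=> /andP[c0 c1] l01 x w.
by apply: addr_ge0; apply: mulr_ge0; rewrite ?subr_ge0 ?addr_ge0 ?IHl.
Qed.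

Lemma exp_walk_triangle (l : seq (V * R)) : probs01 l ->
  forall x y w, exp_walk d x l w <= d x y + exp_walk d y l w.
Proof.
elim: l => [|[z c] l IHl] /=; first by move=> _ x y w; apply: d_triangle.
case/andP=> /andP[c0 c1] l01 x y w.
have t1 : 0 <= c * (d x y + d y z - d x z) by rewrite mulr_ge0 // subr_ge0.
have t2 : 0 <= (1 - c) * (d x y + exp_walk d y l w - exp_walk d x l w).
  by rewrite mulr_ge0 ?subr_ge0 ?IHl.
lra.
Qed.

Lemma exp_walk_nseq_here k a c l w :
  exp_walk d a (nseq k (a, c) ++ l) w = exp_walk d a l w.
Proof. by elim: k => //= k ->; rewrite dxx; ring. Qed.

Lemma exp_walk_run k a c l x w :
  exp_walk d x (nseq k (a, c) ++ l) w = exp_walk d x ((a, 1 - (1 - c) ^+ k) :: l) w.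
Proof.
elim: k => [|k IHk] /=; first by rewrite expr0; ring.
by rewrite IHk /= exp_walk_nseq_here exprS; ring.
Qed.

Lemma exp_walk_nseq_target k c x w : exp_walk d x (nseq k (w, c)) w = d x w.
Proof. by elim: k x => //= k IHk x; rewrite !IHk dxx; ring. Qed.

Variables (p : R) (pr : V -> R) (x0 : V).
Hypotheses (p01 : 0 <= p <= 1) (pr01 : forall v, 0 <= pr v <= 1).

Lemma exp_walk_undup_le (m : seq V) : contiguous x0 m ->
  (forall u, u \in m -> pr u / 2 <= 1 - (1 - p) ^+ count_mem u m) ->
  forall j, (j < size m)%N -> forall x,
  exp_walk d x [seq (u, pr u) | u <- take (index (nth x0 m j) (undup m)) (undup m)]
    (nth x0 m j)
  <= 3 * exp_walk d x [seq (u, p) | u <- take j m] (nth x0 m j).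
Proof.
have [n] := ubnP (size m); elim: n m => // n IHn [//|a m1] size_m cm count_ok j j_lt x.
have [c [m2 [Em am2 cm2]]] := contiguous_run cm.
rewrite Em in size_m count_ok j_lt *.
have undup_m : undup (nseq c.+1 a ++ m2) = a :: undup m2.
  by clear -am2; elim: c => /= [|c ->]; rewrite ?(negbTE am2) // inE eqxx.
rewrite undup_m; case: (ltnP j c.+1) => [j_run | run_j].
  rewrite nth_cat size_nseq j_run nth_nseq j_run take_cat size_nseq j_run.
  rewrite take_nseq ?(ltnW j_run) // map_nseq /= eqxx take0 /=.
  by rewrite exp_walk_nseq_target ler_peMl ?d_ge0 ?ler1n.
have [j' Ej] : exists j', j = (c.+1 + j')%N by exists (j - c.+1)%N; rewrite subnKC.
move: j_lt; rewrite Ej size_cat size_nseq ltn_add2l nth_nseq_cat => j'_lt.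
set v := nth x0 m2 j'.
have av : (a == v) = false by apply: contraNF am2 => /eqP->; apply: mem_nth.
have count_m2 u : u \in m2 -> count_mem u (nseq c.+1 a ++ m2) = count_mem u m2.
  move=> um2; rewrite count_cat count_nseq /=.
  by have -> : (a == u) = false by apply: contraNF am2 => /eqP->.
have count_a : count_mem a (nseq c.+1 a ++ m2) = c.+1.
  by rewrite count_cat count_nseq /= eqxx (count_memPn am2) addn0 mul1n.
have size_m2 : (size m2 < n)%N.
  by move: size_m; rewrite size_cat size_nseq addSn ltnS => /(leq_ltn_trans (leq_addl _ _)).
have count_ok2 u : u \in m2 -> pr u / 2 <= 1 - (1 - p) ^+ count_mem u m2.
  by move=> um2; rewrite -count_m2 // count_ok // mem_cat um2 orbT.
have IHm2 := IHn m2 size_m2 cm2 count_ok2 j' j'_lt.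
rewrite takeD take_size_cat ?size_nseq // drop_size_cat ?size_nseq //.
rewrite map_cat map_nseq exp_walk_run /= av /=.
apply: run_step_le.
- exact: pr01.
- by rewrite -count_a count_ok // mem_cat mem_nseq eqxx.
- exact: IHm2.
- exact: IHm2.
- by apply: exp_walk_triangle; apply: probs01_map.
- by rewrite d_sym; apply: exp_walk_triangle; apply: probs01_map.
Qed.

End ExpectedWalkMetric.

Lemma mul_1Dn_exprB_le1 (R : realFieldType) (p : R) t :
  0 <= p <= 1 -> (1 + t%:R * p) * (1 - p) ^+ t <= 1.
Proof.
move=> /andP[p0 p1]; elim: t => [|t IHt]; first by rewrite mul0r addr0 expr0 mulr1.
have q0 : 0 <= (1 - p) ^+ t by rewrite exprn_ge0 // subr_ge0.
have : 0 <= (t%:R * p * p + p * p) * (1 - p) ^+ t.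
  by rewrite mulr_ge0 // addr_ge0 // !mulr_ge0.
rewrite exprS -addn1 natrD; nra.
Qed.

Lemma half_le_1_sub_exprB (R : realFieldType) (p a : R) t :
  0 <= p <= 1 -> 0 <= a <= 1 -> a <= t%:R * p -> a / 2 <= 1 - (1 - p) ^+ t.
Proof.
move=> p01 /andP[a0 a1] a_tp; have := mul_1Dn_exprB_le1 t p01.
have q0 : 0 <= (1 - p) ^+ t by case/andP: p01 => _ p1; rewrite exprn_ge0 // subr_ge0.
have : 0 <= (t%:R * p - a) * (1 - p) ^+ t by rewrite mulr_ge0 // subr_ge0.
nra.
Qed.

Lemma expR1_le (R : realType) : expR (1 : R) <= (4 / 3) ^+ 4.
Proof.
have -> : expR (1 : R) = expR (1 / 4) ^+ 4.
  by rewrite -expRM_natl mulrCA mulfV ?pnatr_eq0 // mulr1.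
rewrite lerXn2r ?nnegrE ?expR_ge0 //; first lra.
have : expR (1 / 4 : R) * expR (- (1 / 4)) = 1 := expRxMexpNx_1 _.
have := expR_ge1Dx (- (1 / 4) : R); have := expR_gt0 (1 / 4 : R).
nra.
Qed.

Lemma three_le_e_ratio_cube (R : realType) :
  3 <= (expR (1 : R) / (expR 1 - 1)) ^+ 3.
Proof.
have e_le := @expR1_le R; have e_gt1 : 1 < expR (1 : R) by rewrite expR_gt1.
(* [e / (e - 1)] decreases in [e], and [e <= 256 / 81]. *)
apply: (@le_trans _ _ ((256 / 175) ^+ 3)); first by rewrite !exprS expr0; lra.
rewrite lerXn2r ?nnegrE //.
- lra.
- by rewrite divr_ge0 ?expR_ge0 // subr_ge0 ltW.
- by rewrite ler_pdivlMr ?subr_gt0 //; move: e_le; rewrite !exprS expr0; lra.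
Qed.

Section UniformInstance.
Variables (R : realType) (V : finType) (pr : V -> R).

Lemma count_copies (s : seq (copyT pr)) (u : V) :
  perm_eq s (enum (copyT pr)) -> count_mem u (map tag s) = ncopies pr u.
Proof.
move=> ps; rewrite count_map -sum1_count (perm_big _ ps) big_enum_cond /=.
transitivity (\sum_(v : V) \sum_(i : 'I_(ncopies pr v) | v == u) 1)%N.
  by rewrite (sig_big_dep xpredT (fun v (_ : 'I_(ncopies pr v)) => v == u)).
rewrite (bigD1 u) //= [X in (_ + X)%N]big1 ?addn0 => [|v /negbTE vu]; last first.
  by rewrite big_pred0 // => i; rewrite vu.
by rewrite (eq_bigl xpredT) ?sum1_card ?card_ord // => i; rewrite eqxx.
Qed.

Lemma sum_copies (F : V -> R) :
  \sum_(x : copyT pr) F (tag x) = \sum_(v : V) (ncopies pr v)%:R * F v.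
Proof.
rewrite -(sig_big_dep xpredT (fun v (_ : 'I_(ncopies pr v)) => true) (fun v _ => F v)) /=.
by apply: eq_bigr => v _; rewrite sumr_const card_ord mulr_natl.
Qed.

Lemma consecutive_contiguous (s : seq (copyT pr)) (y : copyT pr) :
  consecutive s -> contiguous (tag y) (map tag s).
Proof.
move=> cs i j k /andP[ij jk]; rewrite size_map => ks.
have js := leq_ltn_trans jk ks; have i_lt := leq_ltn_trans ij js.
by rewrite !(nth_map y) //; apply: cs.
Qed.

Hypothesis V_gt0 : (0 < #|V|)%N.

Lemma unif_p_gt0 : (forall v, 0 < pr v) -> 0 < unif_p pr.
Proof.
move=> pr_gt0; rewrite divr_gt0 ?ltr0n //.
by apply: (big_ind (fun x => 0 < x)) => // x y x0 y0; rewrite lt_min x0.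
Qed.

Lemma unif_p01 : (forall v, 0 < pr v) -> 0 <= unif_p pr <= 1.
Proof.
move=> pr_gt0; rewrite ltW ?unif_p_gt0 //= ler_pdivrMr ?ltr0n // mul1r.
apply: (@le_trans _ _ 1); last by rewrite ler1n.
by elim/big_rec: _ => // v x _ x1; rewrite ge_min x1 orbT.
Qed.

Lemma pr_le_ncopies (v : V) : (forall v, 0 < pr v) ->
  pr v <= (ncopies pr v)%:R * unif_p pr.
Proof.
move=> pr_gt0; have p_gt0 := unif_p_gt0 pr_gt0.
have ceil_ge0 : 0 <= Num.ceil (pr v / unif_p pr).
  by rewrite ceil_ge0 (lt_le_trans _ (divr_ge0 (ltW (pr_gt0 v)) (ltW p_gt0))) ?ltrN10.
by rewrite /ncopies natr_absz ger0_norm // -ler_pdivrMr // ceil_ge.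
Qed.

Lemma ncopies_gt0 (v : V) : (forall v, 0 < pr v) -> (0 < ncopies pr v)%N.
Proof.
move=> pr_gt0; rewrite lt0n; apply: contraTneq (pr_le_ncopies v pr_gt0) => ->.
by rewrite mul0r -ltNge.
Qed.

End UniformInstance.

Lemma exp_latency_induced_le (R : realType) (V : finType) (d : V -> V -> R) (r : V)
    (pr : V -> R) (shat : seq (copyT pr)) :
  is_metric d -> (forall v, 0 < pr v <= 1) -> master_tour shat -> consecutive shat ->
  exp_latency d id r pr (induced_tour shat)
    <= 3 * exp_latency d (@copy_loc R V pr) r (@copy_prob R V pr) shat.
Proof.
move=> d_metric pr01 ms cs.
have pr_gt0 v : 0 < pr v by case/andP: (pr01 v).
have pr01' v : 0 <= pr v <= 1 by rewrite ltW ?pr_gt0 //; case/andP: (pr01 v).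
have V_gt0 (v : V) : (0 < #|V|)%N by apply/card_gt0P; exists v.
set p := unif_p pr; set m := map tag shat.
have p01 (v : V) : 0 <= p <= 1 by apply: unif_p01 (V_gt0 v) pr_gt0.
have s_uniq : uniq shat by rewrite (perm_uniq ms) enum_uniq.
have s_all x : x \in shat by rewrite (perm_mem ms) mem_enum.
have m_all v : v \in undup m.
  rewrite mem_undup; apply/mapP.
  by exists (existT _ v (Ordinal (ncopies_gt0 (V_gt0 v) v pr_gt0))).
rewrite /induced_tour -/m !exp_latency_prefix ?undup_uniq //.
set G := fun v => exp_walk d r [seq (u, pr u) | u <- take (index v (undup m)) (undup m)] v.
apply: (@le_trans _ _ (\sum_(v : V) (ncopies pr v)%:R * (p * G v))).
  apply: ler_sum => v _; rewrite mulrA ler_wpM2r ?pr_le_ncopies ?V_gt0 //.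
  exact/exp_walk_ge0/probs01_map.
rewrite -sum_copies big_distrr; apply: ler_sum => x _ /=.
rewrite /copy_prob /copy_loc -/p mulrCA.
apply: ler_wpM2l; first by case/andP: (p01 (tag x)).
have -> : [seq (tag y, p) | y <- take (index x shat) shat]
        = [seq (u, p) | u <- take (index x shat) m] by rewrite /m -map_take -map_comp.
have count_ok u : u \in m -> pr u / 2 <= 1 - (1 - p) ^+ count_mem u m.
  move=> _; rewrite count_copies //.
  exact: half_le_1_sub_exprB (p01 u) (pr01' u) (pr_le_ncopies (V_gt0 u) u pr_gt0).
have nth_x : nth (tag x) m (index x shat) = tag x by rewrite (nth_map x) ?nth_index ?index_mem.
have j_lt : (index x shat < size m)%N by rewrite size_map index_mem.
have cm := consecutive_contiguous (y := x) cs.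
by have := exp_walk_undup_le d_metric (p01 (tag x)) pr01' cm count_ok j_lt r; rewrite nth_x.
Qed.

Unset Implicit Arguments.

Theorem lemma5 (R : realType) (V : finType) (d : V -> V -> R) (r : V)
    (pr : V -> R) (shat : seq (copyT pr)) :
  is_metric d ->
  (forall v, 1 / (#|V|%:R ^+ 2) <= pr v /\ pr v <= 1) ->
  master_tour shat ->
  consecutive shat ->
  exp_latency d id r pr (induced_tour shat)
    <= (expR 1 / (expR 1 - 1)) ^+ 3 * (1 + 1 / #|V|%:R) ^+ 3
       * exp_latency d (@copy_loc R V pr) r (@copy_prob R V pr) shat.
Proof.
move=> d_metric pr_bounds ms cs.
have V_gt0 (v : V) : (0 < #|V|)%N by apply/card_gt0P; exists v.
have pr01 v : 0 < pr v <= 1.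
  case: (pr_bounds v) => pr_lb ->; rewrite andbT (lt_le_trans _ pr_lb) //.
  by rewrite divr_gt0 // exprn_gt0 // ltr0n V_gt0.
apply: le_trans (exp_latency_induced_le r d_metric pr01 ms cs) _.
apply: ler_wpM2r.
  apply: exp_latency_ge0 => [x y | x]; first by case: d_metric.
  by apply: unif_p01 => [|v]; [exact: V_gt0 (tag x) | case/andP: (pr01 v)].
have e3 := three_le_e_ratio_cube R.
by rewrite (le_trans e3) // ler_peMr ?(le_trans _ e3) // exprn_ege1 // lerDl divr_ge0.
Qed.
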